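(* Let $I$ be any instance of the Partition problem with $n$ jobs, processing times $p_1\ge p_2\ge\dots\ge p_n>0$, optimal makespan $y^*$ and set of local optima $\mathcal{L}$. Let $\epsilon>0$ and $s:=\lceil 2/\epsilon\rceil-1\le n/2$; jobs $1,\dots,s$ are called large and the others small. Then: (1) for all $j\in\{s+1,\dots,n\}$, $p_j\le\frac{\epsilon}{2}\sum_{i=1}^n p_i$; (2) if at least one small job is assigned to the fuller machine of a solution $x\in\mathcal{L}$, then $x$ is a $(1+\epsilon)$ approximation; (3) if $\sum_{i=s+1}^n p_i\ge\frac12\sum_{i=1}^n p_i$, then every $x\in\mathcal{L}$ is a $(1+\epsilon)$ approximation; (4) $|\{y\in((1+\epsilon)y^*,\infty):\exists x\in\mathcal{L} \text{ with } f(x)=y\}|\le 2^{2/\epsilon}$.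
   Context: Partition problem: a solution $x\in\{0,1\}^n$ assigns job $i$ to machine $M_1$ if $x_i=0$ and to $M_2$ if $x_i=1$; the makespan $f(x)=\max\{\sum_i p_ix_i,\sum_i p_i(1-x_i)\}$ is minimised and $y^*=\min_x f(x)$. The fuller machine of $x$ is the machine whose load attains $f(x)$. A local optimum is a solution such that no solution at Hamming distance $1$ has strictly smaller makespan. A $(1+\epsilon)$ approximation is a solution $x$ with $f(x)\le(1+\epsilon)y^*$. *)

From HB Require Import structures.
From mathcomp Require Import all_boot all_order all_algebra.
From mathcomp Require Import all_classical all_reals all_analysis.
Set Implicit Arguments. Unset Strict Implicit. Unset Printing Implicit Defensive.
Import Order.TTheory GRing.Theory Num.Theory.
Local Open Scope ring_scope.

Section Partition.
Variables (R : realType) (n : nat) (p : 'I_n -> R).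

(* A solution: x i = true means job i is on machine M2, false means M1. *)
Definition sol := {ffun 'I_n -> bool}.

Definition load1 (x : sol) : R := \sum_(i | ~~ x i) p i.
Definition load2 (x : sol) : R := \sum_(i | x i) p i.
Definition load (x : sol) (b : bool) : R := if b then load2 x else load1 x.

Definition makespan (x : sol) : R := Num.max (load2 x) (load1 x).

Definition opt : R :=
  \big[Num.min/makespan [ffun => false]]_(x : sol) makespan x.

Definition hamming (x x' : sol) : nat := #|[set i | x i != x' i]|.

Definition is_local_opt (x : sol) : Prop :=
  forall x' : sol, hamming x x' = 1%N -> ~ (makespan x' < makespan x).

Definition is_approx (eps : R) (x : sol) : Prop :=
  makespan x <= (1 + eps) * opt.

Definition on_fuller (x : sol) (j : 'I_n) : Prop :=
  load x (x j) = makespan x.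

End Partition.

(* A local optimum gains nothing by moving a job j of its fuller machine to
   the other one, so 2 f(x) <= P + p_j, where P = sum_i p_i <= 2 y^*.  A small
   job j satisfies (s + 1) p_j <= P, since the s + 1 >= 2/eps largest jobs
   each weigh at least p_j; hence p_j <= eps/2 P, and a small job on the
   fuller machine makes x a (1 + eps) approximation.  A local optimum that is
   not one therefore carries only large jobs on its fuller machine, and its
   makespan is the load of one of the 2^s <= 2^(2/eps) sets of large jobs.  If
   the small jobs weigh at least P/2, a fuller machine without small jobs has
   load at most P/2 <= y^*. *)

From HB Require Import structures.
From mathcomp Require Import all_boot all_order all_algebra.
From mathcomp Require Import all_classical all_reals all_analysis.
From mathcomp Require Import lra.
Set Implicit Arguments.
Unset Strict Implicit.
Unset Printing Implicit Defensive.
Import Order.TTheory GRing.Theory Num.Theory.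
Local Open Scope ring_scope.

Lemma ceilB1_nat (F : archiRealFieldType) (a : F) : 0 < a ->
  exists k : nat, [/\ Num.ceil a - 1 = k%:Z, a <= k%:R + 1 & k%:R < a].
Proof.
move=> a_gt0; have ceil_ge1 : 1 <= Num.ceil a by rewrite -gtz0_ge1 ceil_gt0.
have ceilE : Num.ceil a - 1 = `|Num.ceil a - 1|%N by rewrite gez0_abs ?subr_ge0.
exists `|Num.ceil a - 1|%N; rewrite !pmulrn -ceilE.
split=> //; last exact: ceilB1_lt.
by rewrite -[1]/(1%:~R) -intrD subrK ceil_ge.
Qed.

Lemma ler_sum_nneg_subset (R : numDomainType) (I : finType) (P Q : pred I)
    (F : I -> R) :
  (forall i, 0 <= F i) -> (forall i, P i -> Q i) ->
  \sum_(i | P i) F i <= \sum_(i | Q i) F i.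
Proof.
move=> F_ge0 PQ; rewrite big_mkcond [leRHS]big_mkcond ler_sum // => i _.
by case: (boolP (P i)) => [/PQ -> | _] //; case: ifP.
Qed.

Lemma card_ord_lt n k : (#|[set i : 'I_n | (i < k)%N]| <= k)%N.
Proof.
rewrite cardE -(size_map val) -[X in (_ <= X)%N](size_iota 0).
apply: uniq_leq_size; first by rewrite (map_inj_uniq val_inj) enum_uniq.
by move=> m /mapP[i]; rewrite mem_enum inE => i_lt_k ->; rewrite mem_iota.
Qed.

Section Partition.
Variables (R : realType) (n : nat) (p : 'I_n -> R).
Local Notation total := (\sum_(i < n) p i).

Lemma loadE (x : sol n) b : load p x b = \sum_(i | x i == b) p i.
Proof.
by case: b; rewrite /load /load1 /load2; apply: eq_bigl => i; case: (x i).
Qed.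

Lemma load_addN (x : sol n) b : load p x b + load p x (~~ b) = total.
Proof.
rewrite (bigID (fun i => x i == b)) /= !loadE; congr (_ + _).
by apply: eq_bigl => i; case: b; case: (x i).
Qed.

Lemma makespanE (x : sol n) b :
  makespan p x = Num.max (load p x b) (load p x (~~ b)).
Proof. by case: b; rewrite /makespan /load // maxC. Qed.

Lemma fuller_exists (x : sol n) : exists b, load p x b = makespan p x.
Proof.
rewrite (makespanE x true).
by case: leP => _; [exists false | exists true].
Qed.

Lemma makespan_ge (x : sol n) : total / 2 <= makespan p x.
Proof.
rewrite (makespanE x true) -(load_addN x true).
set a := load p x true; set c := load p x (~~ true).
have : a <= Num.max a c by rewrite le_max lexx.
have : c <= Num.max a c by rewrite le_max lexx orbT.
lra.
Qed.

Lemma opt_ge : total / 2 <= opt p.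
Proof.
apply: (big_ind (fun y => total / 2 <= y)); first exact: makespan_ge.
- by move=> a c ha hc; rewrite le_min ha hc.
- by move=> x _; exact: makespan_ge.
Qed.

Lemma opt_ge0 : (forall i, 0 <= p i) -> 0 <= opt p.
Proof. by move=> p_ge0; apply: le_trans opt_ge; rewrite divr_ge0 ?sumr_ge0. Qed.

Definition flip (x : sol n) (j : 'I_n) : sol n :=
  [ffun i => if i == j then ~~ x i else x i].

Lemma hamming_flip (x : sol n) j : hamming x (flip x j) = 1%N.
Proof.
rewrite /hamming (_ : [set i | x i != flip x j i] = [set j]) ?cards1 //.
apply/setP=> i; rewrite !inE ffunE.
by case: (i =P j) => [->|_]; [case: (x j) | rewrite eqxx].
Qed.

Lemma load_flip (x : sol n) j :
  load p (flip x j) (~~ x j) = p j + load p x (~~ x j).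
Proof.
rewrite !loadE (bigD1 j) /=; last by rewrite ffunE eqxx.
congr (_ + _); apply: eq_bigl => i; rewrite ffunE.
case: (i =P j) => [->|_] /=; last by rewrite andbT.
by rewrite eqxx andbF; case: (x j).
Qed.

(* Moving [j] to the other machine must not lower the makespan, and as
   [p j > 0] that machine then becomes the fuller one. *)
Lemma local_opt_fuller_le (x : sol n) j : 0 < p j -> is_local_opt p x ->
  on_fuller p x j -> 2 * makespan p x <= total + p j.
Proof.
move=> pj_gt0 x_loc; rewrite /on_fuller => fuller.
have /negP := x_loc _ (hamming_flip x j); rewrite -leNgt.
rewrite [makespan p (flip x j)](makespanE _ (x j)) le_max -fuller.
have := load_flip x j; have := load_addN (flip x j) (x j).
have := load_addN x (x j).
by move=> ? ? ? /orP[]; lra.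
Qed.

Lemma natS_mul_le_sum_sorted (j : 'I_n) :
  (forall i j : 'I_n, (i <= j)%N -> p j <= p i) -> (forall i, 0 <= p i) ->
  j.+1%:R * p j <= total.
Proof.
move=> p_sorted p_ge0.
rewrite mulr_natl -[j.+1]subn0 -sumr_const_nat big_mkord.
rewrite (big_ord_widen _ (fun=> p j) (ltn_ord j)).
apply: (le_trans _ (ler_sum_nneg_subset p_ge0 (fun i _ => isT))).
by apply: ler_sum => i; rewrite ltnS; exact: p_sorted.
Qed.

Lemma fuller_avoiding_heavy_le_opt (S : pred 'I_n) (x : sol n) b :
  (forall i, 0 <= p i) -> load p x b = makespan p x ->
  (forall i, S i -> x i != b) -> total / 2 <= \sum_(i | S i) p i ->
  makespan p x <= opt p.
Proof.
move=> p_ge0 fuller S_off heavy.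
have S_le : \sum_(i | S i) p i <= load p x (~~ b).
  rewrite loadE; apply: ler_sum_nneg_subset => // i /S_off.
  by case: (x i); case: (b).
have := load_addN x b; have := opt_ge; rewrite fuller; lra.
Qed.

Lemma card_makespans_le (P : pred (sol n)) k :
    (forall x, P x -> exists2 b, load p x b = makespan p x &
                                 forall i, x i == b -> (i < k)%N) ->
  (size (undup [seq makespan p x | x <- enum P]) <= 2 ^ k)%N.
Proof.
move=> P_large; set L := [set i : 'I_n | (i < k)%N].
have sub : {subset undup [seq makespan p x | x <- enum P]
             <= [seq \sum_(i in A) p i | A : {set 'I_n} <- enum (powerset L)]}.
  move=> y; rewrite mem_undup => /mapP[x]; rewrite mem_enum.
  move=> /P_large[b fuller large] ->; apply/mapP; exists [set i | x i == b].
    rewrite mem_enum powersetE; apply/fintype.subsetP => i.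
    by rewrite !inE; exact: large.
  by rewrite -fuller loadE; apply: eq_bigl => i; rewrite inE.
apply: leq_trans (uniq_leq_size (undup_uniq _) sub) _.
by rewrite size_map -cardE card_powerset leq_pexp2l ?card_ord_lt.
Qed.

End Partition.

Section Approximation.
Variables (R : realType) (n : nat) (p : 'I_n -> R) (eps : R) (k : nat).
Hypothesis p_sorted : forall i j : 'I_n, (i <= j)%N -> p j <= p i.
Hypothesis p_gt0 : forall i, 0 < p i.
Hypothesis eps_gt0 : 0 < eps.
Hypothesis k_large : 2 / eps <= k%:R + 1.
Local Notation total := (\sum_(i < n) p i).

Let p_ge0 i : 0 <= p i. Proof. exact: ltW. Qed.

Lemma small_job_le (j : 'I_n) : (k <= j)%N -> p j <= eps / 2 * total.
Proof.
move=> k_le_j.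
have kS_le : (k%:R + 1) * p j <= total.
  apply: le_trans (natS_mul_le_sum_sorted _ p_sorted p_ge0); rewrite -natr1.
  by apply: ler_wpM2r; rewrite // lerD2r ler_nat.
have kS_eps : 2 <= (k%:R + 1) * eps by rewrite -ler_pdivrMr.
rewrite mulrAC ler_pdivlMr // mulrC.
apply: le_trans (ler_wpM2l (ltW eps_gt0) kS_le).
by rewrite mulrA [eps * _]mulrC ler_wpM2r.
Qed.

Lemma approx_of_small_on_fuller (x : sol n) (j : 'I_n) : is_local_opt p x ->
  (k <= j)%N -> on_fuller p x j -> is_approx p eps x.
Proof.
move=> x_loc k_le_j fuller; rewrite /is_approx mulrDl mul1r.
have T_le : total <= 2 * opt p by have := opt_ge p; lra.
have := ler_wpM2l (ltW eps_gt0) T_le; rewrite mulrCA.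
have := small_job_le k_le_j; rewrite mulrAC ler_pdivlMr //.
have := local_opt_fuller_le (p_gt0 j) x_loc fuller.
have := mulr_ge0 (ltW eps_gt0) (opt_ge0 p_ge0).
lra.
Qed.

Lemma fuller_only_large_of_not_approx (x : sol n) :
  is_local_opt p x -> ~ is_approx p eps x ->
  exists2 b, load p x b = makespan p x & forall i, x i == b -> (i < k)%N.
Proof.
move=> x_loc not_approx; have [b fuller] := fuller_exists p x.
exists b => // i /eqP xi; rewrite ltnNge; apply/negP => k_le_i.
apply/not_approx/(approx_of_small_on_fuller x_loc k_le_i).
by rewrite /on_fuller xi.
Qed.

Lemma approx_of_heavy_small_jobs (x : sol n) :
  total / 2 <= \sum_(i < n | (k <= i)%N) p i -> is_local_opt p x ->
  is_approx p eps x.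
Proof.
move=> heavy x_loc; have [//|not_approx] := pselect (is_approx p eps x).
have [b fuller large] := fuller_only_large_of_not_approx x_loc not_approx.
have S_off (i : 'I_n) : (k <= i)%N -> x i != b.
  by apply: contraTN => /large; rewrite ltnNge.
have := fuller_avoiding_heavy_le_opt p_ge0 fuller S_off heavy.
have := mulr_ge0 (ltW eps_gt0) (opt_ge0 p_ge0).
by rewrite /is_approx; lra.
Qed.

Lemma card_nonapprox_local_makespans :
  (size (undup [seq makespan p x |
     x <- enum [pred x : sol n |
                `[< is_local_opt p x >] &&
                ((1 + eps) * opt p < makespan p x)%R]])
   <= 2 ^ k)%N.
Proof.
apply: card_makespans_le => x /andP[/asboolP x_loc worse].
by apply: fuller_only_large_of_not_approx; rewrite // /is_approx leNgt worse.
Qed.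

End Approximation.

Theorem mainTheorem13 (R : realType) (n : nat) (p : 'I_n -> R) (eps : R) :
  (forall i j : 'I_n, (i <= j)%N -> p j <= p i) ->
  (forall i : 'I_n, 0 < p i) ->
  0 < eps ->
  ((Num.ceil (2 / eps) - 1)%:~R <= n%:R / 2 :> R) ->
  let s : int := Num.ceil (2 / eps) - 1 in
  let total := \sum_(i < n) p i in
  (* (1) *)
  (forall j : 'I_n, s <= (j : nat)%:Z -> p j <= eps / 2 * total) /\
  (* (2) *)
  (forall x : sol n, is_local_opt p x ->
     (exists j : 'I_n, s <= (j : nat)%:Z /\ on_fuller p x j) ->
     is_approx p eps x) /\
  (* (3) *)
  ((\sum_(i < n | s <= (i : nat)%:Z) p i >= total / 2) ->
     forall x : sol n, is_local_opt p x -> is_approx p eps x) /\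
  (* (4) *)
  ((size (undup [seq makespan p x |
        x <- enum [pred x : sol n |
                   `[< is_local_opt p x >] && ((1 + eps) * opt p < makespan p x)]]))%:R
     <= powR 2 (2 / eps)).
Proof.
move=> p_sorted p_gt0 eps_gt0 _ s total.
have [k [sE k_large k_lt]] := ceilB1_nat (divr_gt0 (ltr0n _ 2) eps_gt0).
rewrite /s sE; split; [|split; [|split]].
- by move=> j; exact: small_job_le.
- by move=> x x_loc [j []]; exact: approx_of_small_on_fuller.
- by move=> heavy x; exact: (approx_of_heavy_small_jobs (k := k)).
apply: (@le_trans _ _ (2 ^+ k)).
  by rewrite -natrX ler_nat (card_nonapprox_local_makespans (k := k)).
rewrite -powR_mulrn //; apply: ler_powR; first by rewrite ler1n.
exact: ltW.
Qed.
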